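(* Let $H_1,H_2$ be separable Hilbert spaces, $K\in B(H_1)$, $L\in B(H_2)$, and $\{x_n\oplus y_n\}_{n\geqslant1}\subset H_1\oplus H_2$. (i) If $K=0$ and $L\neq0$, then $\{x_n\oplus y_n\}_{n\geqslant1}$ is a $K\oplus L$-orthonormal basis if and only if $x_n=0$ for all $n\geqslant1$ and $\{y_n\}_{n\geqslant1}$ is an $L$-orthonormal basis for $H_2$. (ii) If $K\neq0$ and $L=0$, then $\{x_n\oplus y_n\}_{n\geqslant1}$ is a $K\oplus L$-orthonormal basis if and only if $y_n=0$ for all $n\geqslant1$ and $\{x_n\}_{n\geqslant1}$ is a $K$-orthonormal basis for $H_1$. (iii) If $K\neq0$, $L\neq0$ and $\{x_n\oplus y_n\}_{n\geqslant1}$ is a $K\oplus L$-orthonormal basis, then: (a) $\{K^*(x_n)\oplus L^*(y_n)\}_{n\geqslant1}$ is the unique $K\oplus L$-dual frame to $\{x_n\oplus y_n\}_{n\geqslant1}$; (b) $\{x_n\}_{n\geqslant1}$ is a $K$-frame for $H_1$ which is not $K$-minimal, and $\{K^*(x_n)\}_{n\geqslant1}$ is a $K$-dual frame to it; (c) $\{y_n\}_{n\geqslant1}$ is an $L$-frame for $H_2$ which is not $L$-minimal, and $\{L^*(y_n)\}_{n\geqslant1}$ is an $L$-dual frame to it.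
   Context: $H_1\oplus H_2$ is the Hilbert space of pairs $x\oplus y$ with inner product $\langle x\oplus y,a\oplus b\rangle=\langle x,a\rangle+\langle y,b\rangle$; $(K\oplus L)(x\oplus y)=K(x)\oplus L(y)$. For a Hilbert space $H$ and $K\in B(H)$: $\{z_n\}_{n\geqslant1}$ is a $K$-frame if there are $A,B>0$ with $A\|K^*z\|^2\leq\sum_n|\langle z,z_n\rangle|^2\leq B\|z\|^2$ for all $z\in H$; it is a Parseval $K$-frame if $\|K^*z\|^2=\sum_n|\langle z,z_n\rangle|^2$ for all $z\in H$. A $K$-orthonormal basis is a sequence that is an orthonormal system and a Parseval $K$-frame. A $K$-dual frame to a $K$-frame $\{z_n\}$ is a Bessel sequence $\{f_n\}$ with $Kz=\sum_n\langle z,f_n\rangle z_n$ for all $z\in H$. A $K$-frame is $K$-minimal if its synthesis operator $T:\ell^2\to H$, $T(\{a_n\})=\sum_na_nz_n$, is injective. *)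

From mathcomp Require Import all_boot all_order all_algebra.
From mathcomp Require Import all_classical all_reals all_analysis.
From mathcomp Require Import complex.
Set Implicit Arguments. Unset Strict Implicit. Unset Printing Implicit Defensive.
Import Order.TTheory GRing.Theory Num.Theory numFieldNormedType.Exports.
Local Open Scope classical_set_scope.
Local Open Scope ring_scope.
Local Open Scope complex_scope.

Section Hilbert.
Variable R : realType.

Definition cnorm2 (c : R[i]) : R := (complex.Re c) ^+ 2 + (complex.Im c) ^+ 2.

Variable H : lmodType R[i].
Implicit Types (ip : H -> H -> R[i]).

Definition is_inner_product ip : Prop :=
  [/\ (forall (a : R[i]) (x y z : H), ip (a *: x + y) z = a * ip x z + ip y z),
      (forall x y : H, ip y x = (ip x y)^*),
      (forall x : H, 0 <= ip x x) &
      (forall x : H, ip x x = 0 -> x = 0)].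

Definition hnorm ip (x : H) : R := Num.sqrt (complex.Re (ip x x)).

Definition hcvg ip (s : nat -> H) (l : H) : Prop :=
  (fun n => hnorm ip (s n - l)) @ \oo --> (0 : R).

Definition hcauchy ip (s : nat -> H) : Prop :=
  forall e : R, 0 < e -> exists N : nat,
    forall m n : nat, (N <= m)%N -> (N <= n)%N -> hnorm ip (s m - s n) < e.

Definition is_hilbert ip : Prop :=
  is_inner_product ip /\
  (forall s : nat -> H, hcauchy ip s -> exists l : H, hcvg ip s l).

Definition separable ip : Prop :=
  exists d : nat -> H, forall (x : H) (e : R), 0 < e -> exists n, hnorm ip (x - d n) < e.

Definition bounded_op ip (K : H -> H) : Prop :=
  (forall (a : R[i]) (x y : H), K (a *: x + y) = a *: K x + K y) /\
  exists M : R, forall x : H, hnorm ip (K x) <= M * hnorm ip x.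

Definition is_adjoint ip (K Kadj : H -> H) : Prop :=
  forall x y : H, ip (K x) y = ip x (Kadj y).

Definition frame_sum ip (zs : nat -> H) (z : H) : \bar R :=
  (\sum_(0 <= n <oo) (cnorm2 (ip z (zs n)))%:E)%E.

Definition K_frame ip (Kadj : H -> H) (zs : nat -> H) : Prop :=
  exists A B : R, [/\ 0 < A, 0 < B &
    forall z : H, ((A * hnorm ip (Kadj z) ^+ 2)%:E <= frame_sum ip zs z)%E /\
                  (frame_sum ip zs z <= (B * hnorm ip z ^+ 2)%:E)%E].

Definition parseval_K_frame ip (Kadj : H -> H) (zs : nat -> H) : Prop :=
  forall z : H, (hnorm ip (Kadj z) ^+ 2)%:E = frame_sum ip zs z.

Definition orthonormal_system ip (zs : nat -> H) : Prop :=
  forall n m : nat, ip (zs n) (zs m) = (if n == m then 1 else 0).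

Definition K_orthonormal_basis ip (Kadj : H -> H) (zs : nat -> H) : Prop :=
  orthonormal_system ip zs /\ parseval_K_frame ip Kadj zs.

Definition bessel ip (fs : nat -> H) : Prop :=
  exists B : R, 0 < B /\ forall z : H, (frame_sum ip fs z <= (B * hnorm ip z ^+ 2)%:E)%E.

Definition K_dual_frame ip (K : H -> H) (zs fs : nat -> H) : Prop :=
  bessel ip fs /\
  forall z : H, hcvg ip (fun N => \sum_(0 <= n < N) ip z (fs n) *: zs n) (K z).

Definition l2seq (a : nat -> R[i]) : Prop :=
  (\sum_(0 <= n <oo) (cnorm2 (a n))%:E < +oo)%E.

Definition synthesis ip (zs : nat -> H) (a : nat -> R[i]) (t : H) : Prop :=
  hcvg ip (fun N => \sum_(0 <= n < N) a n *: zs n) t.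

Definition K_minimal ip (zs : nat -> H) : Prop :=
  forall (a b : nat -> R[i]) (t : H), l2seq a -> l2seq b ->
    synthesis ip zs a t -> synthesis ip zs b t -> a = b.

End Hilbert.

Definition dsum_ip (R : realType) (H1 H2 : lmodType R[i])
  (ip1 : H1 -> H1 -> R[i]) (ip2 : H2 -> H2 -> R[i]) : (H1 * H2)%type -> (H1 * H2)%type -> R[i] :=
  fun u v => ip1 u.1 v.1 + ip2 u.2 v.2.

Definition dsum_op (H1 H2 : Type) (K : H1 -> H1) (L : H2 -> H2) : (H1 * H2)%type -> (H1 * H2)%type :=
  fun u => (K u.1, L u.2).

(** Parseval's identity [|K^* z|^2 = sum_n |<z, e_n>|^2] for an orthonormal K-basis [e]
   does all the work.  For the remainder [r_N = sum_(n < N) <K z, e_n> e_n - K z],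
   orthogonality gives [|r_N|^2 = - <z, K^* r_N> <= |z| |K^* r_N|], while
   [|K^* r_N|^2 = sum_(n >= N) |<K z, e_n>|^2] is the tail of a convergent series; hence
   [sum_n <z, K^* e_n> e_n --> K z], and since the coefficients of any expansion along
   an orthonormal system are forced, [K^* e_n] is the only K-dual frame.
   On [H1 (+) H2], Parseval's identity at [(u, 0)] makes [x] a Parseval K-frame of [H1],
   and projecting the expansion of [(K u, L 0)] gives the K-dual [K^* x_n].  If [L w <> 0],
   the coefficients [<(0, w), (K (+) L)^* (x_n, y_n)>] expand [(0, L w)]: they are not all
   zero, yet they synthesise [0] from [x], so [x] is not K-minimal.  When [K = 0],
   Parseval's identity at [(x_n, 0)] forces [x_n = 0].  Swapping the two summands
   exchanges the roles of [x] and [y]. *)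

From mathcomp Require Import all_boot all_order all_algebra.
From mathcomp Require Import all_classical all_reals all_analysis.
From mathcomp Require Import complex.
From mathcomp Require Import lra.
Set Implicit Arguments.
Unset Strict Implicit.
Unset Printing Implicit Defensive.
Import Order.TTheory GRing.Theory Num.Theory numFieldNormedType.Exports.
Local Open Scope classical_set_scope.
Local Open Scope ring_scope.
Local Open Scope complex_scope.

Section ComplexModulus.
Variable R : realType.
Implicit Type c : R[i].

Lemma cnorm2E c : (cnorm2 c)%:C = c * c^*%C.
Proof. by rewrite add_Re2_Im2 sqr_normc. Qed.

Lemma cnorm2_ge0 c : 0 <= cnorm2 c.
Proof. exact: addr_ge0 (sqr_ge0 _) (sqr_ge0 _). Qed.

Lemma cnorm2_eq0 c : cnorm2 c = 0 -> c = 0.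
Proof.
move=> c0; apply/eqP; rewrite -normr_eq0 -(@sqrf_eq0 _ `|c|) -add_Re2_Im2.
by rewrite -/(cnorm2 c) c0.
Qed.

Lemma cnorm20 : cnorm2 (0 : R[i]) = 0.
Proof. by rewrite /cnorm2 /= expr0n addr0. Qed.

Lemma cnorm2N c : cnorm2 (- c) = cnorm2 c.
Proof. by case: c => a b; rewrite /cnorm2 /= !sqrrN. Qed.

Lemma sqr_Re_le_cnorm2 c : complex.Re c ^+ 2 <= cnorm2 c.
Proof. by rewrite lerDl sqr_ge0. Qed.

End ComplexModulus.

Lemma sqr_cvg0 (R : realType) (f : nat -> R) : (forall n, 0 <= f n) ->
  (fun n => f n ^+ 2) @ \oo --> (0 : R) -> f @ \oo --> (0 : R).
Proof.
move=> f0 f2; have -> : f = Num.sqrt \o (fun n => f n ^+ 2).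
  by apply/funext => n /=; rewrite sqrtr_sqr ger0_norm.
by rewrite -sqrtr0; apply: continuous_cvg => //; exact: sqrt_continuous.
Qed.

Lemma eseries_tail (R : realType) (f : nat -> \bar R) N :
  (\sum_(N <= n <oo) f n = \sum_(0 <= n <oo) (if (n < N)%N then 0 else f n))%E.
Proof.
rewrite eseries_cond eseries_mkcondr; apply: eq_eseriesr => n _.
by rewrite leqNgt; case: ltnP.
Qed.

Section InnerProduct.
Variables (R : realType) (H : lmodType R[i]) (ip : H -> H -> R[i]).
Hypothesis hip : is_inner_product ip.

Lemma ipDl x y z : ip (x + y) z = ip x z + ip y z.
Proof. by have [lin _ _ _] := hip; rewrite -{1}(scale1r x) lin mul1r. Qed.

Lemma ip0l z : ip 0 z = 0.
Proof. by apply: (addrI (ip 0 z)); rewrite -ipDl !addr0. Qed.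

Lemma ipZl a x z : ip (a *: x) z = a * ip x z.
Proof. by have [lin _ _ _] := hip; rewrite -[a *: x]addr0 lin ip0l addr0. Qed.

Lemma ipNl x z : ip (- x) z = - ip x z.
Proof. by rewrite -scaleN1r ipZl mulN1r. Qed.

Lemma ipBl x y z : ip (x - y) z = ip x z - ip y z.
Proof. by rewrite ipDl ipNl. Qed.

Lemma ipC x y : ip x y = (ip y x)^*%C.
Proof. by have [_ -> _ _] := hip. Qed.

Lemma ip0r z : ip z 0 = 0.
Proof. by rewrite ipC ip0l conjc0. Qed.

Lemma ipZr a x z : ip z (a *: x) = a^*%C * ip z x.
Proof. by rewrite ipC ipZl rmorphM [ip z x]ipC. Qed.

Lemma ipNr x z : ip z (- x) = - ip z x.
Proof. by rewrite ipC ipNl rmorphN [ip z x]ipC. Qed.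

Lemma ipBr x y z : ip z (x - y) = ip z x - ip z y.
Proof. by rewrite ipC ipBl rmorphB [ip z x]ipC [ip z y]ipC. Qed.

Lemma ip_suml I (r : seq I) (P : pred I) (F : I -> H) z :
  ip (\sum_(i <- r | P i) F i) z = \sum_(i <- r | P i) ip (F i) z.
Proof. exact: (big_morph (ip^~ z) (fun x y => ipDl x y z) (ip0l z)). Qed.

Lemma hnorm_ge0 x : 0 <= hnorm ip x.
Proof. exact: sqrtr_ge0. Qed.

Lemma ip_self x : ip x x = (hnorm ip x ^+ 2)%:C.
Proof.
have [_ _ ge0 _] := hip; move: (ge0 x); rewrite lecE /= => /andP[/eqP Im0 Re0].
by rewrite sqr_sqrtr //; case: (ip x x) Im0 => a b /= ->.
Qed.

Lemma hnorm_sqrE x : hnorm ip x ^+ 2 = complex.Re (ip x x).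
Proof. by rewrite ip_self. Qed.

Lemma ip_self_eq0 x : ip x x = 0 -> x = 0.
Proof. by have [_ _ _ def0] := hip; apply: def0. Qed.

Lemma hnorm_eq0 x : hnorm ip x = 0 -> x = 0.
Proof. by move=> x0; apply: ip_self_eq0; rewrite ip_self x0 expr0n. Qed.

Lemma hnorm0 : hnorm ip 0 = 0.
Proof. by rewrite /hnorm ip0l sqrtr0. Qed.

Lemma hnormN x : hnorm ip (- x) = hnorm ip x.
Proof. by rewrite /hnorm ipNl ipNr opprK. Qed.

Lemma cauchy_schwarz a b : cnorm2 (ip a b) <= hnorm ip a ^+ 2 * hnorm ip b ^+ 2.
Proof.
have [b0|b_neq0] := eqVneq (hnorm ip b) 0.
  by rewrite (hnorm_eq0 b0) ip0r cnorm20 hnorm0 expr0n mulr0.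
set A := hnorm ip a ^+ 2; set B := hnorm ip b ^+ 2; set c := ip a b.
(* [v] is the component of [<b, b> a] orthogonal to [b] *)
set v := ip b b *: a - c *: b.
have ip_bv : ip b v = 0.
  by rewrite ipBr !ipZr -ipC [ip b a]ipC -/c mulrC subrr.
have ip_vv : ip v v = (B * (B * A - cnorm2 c))%:C.
  rewrite {1}/v ipBl !ipZl ip_bv mulr0 subr0 ipBr !ipZr -ipC.
  by rewrite [_^*%C * _]mulrC -cnorm2E !ip_self -rmorphM -rmorphB -rmorphM.
have : 0 <= B * (B * A - cnorm2 c) by rewrite -ler0c -ip_vv ip_self ler0c sqr_ge0.
have B_gt0 : 0 < B by rewrite exprn_gt0 // lt_def b_neq0 hnorm_ge0.
by rewrite pmulr_rge0 // subr_ge0 mulrC.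
Qed.

Lemma Re_ip_le a b : complex.Re (ip a b) <= hnorm ip a * hnorm ip b.
Proof.
have := le_trans (sqr_Re_le_cnorm2 _) (cauchy_schwarz a b); rewrite -exprMn.
have := mulr_ge0 (hnorm_ge0 a) (hnorm_ge0 b); nra.
Qed.

Lemma ip_eqr u v : (forall z, ip z u = ip z v) -> u = v.
Proof.
move=> uv; apply/eqP; rewrite -subr_eq0; apply/eqP/ip_self_eq0.
by rewrite ipBr uv subrr.
Qed.

Lemma hcvg_ip_eq s l v c :
  hcvg ip s l -> (\forall N \near \oo, ip (s N) v = c) -> ip l v = c.
Proof.
move=> sl sv; apply/eqP; rewrite -subr_eq0 -oppr_eq0 opprB; apply/eqP/cnorm2_eq0.
apply/eqP; rewrite eq_le cnorm2_ge0 andbT.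
have bound_cvg : (fun N => hnorm ip (s N - l) * hnorm ip (s N - l) * hnorm ip v ^+ 2) @ \oo
    --> (0 : R).
  by rewrite -(mul0r (hnorm ip v ^+ 2)) -(mul0r 0); apply: cvgM; [apply: cvgM|apply: cvg_cst].
apply: (ler_cvg_to (cvg_cst _) bound_cvg); near=> N.
rewrite -expr2 -(near sv N) // -ipBl; exact: cauchy_schwarz.
Unshelve. all: by end_near.
Qed.

Lemma hcvg0_eq0 s l : (forall N, s N = 0) -> hcvg ip s l -> l = 0.
Proof.
move=> s0 sl; apply: ip_self_eq0; apply: (hcvg_ip_eq sl).
by near=> N; rewrite s0 ip0l.
Unshelve. all: by end_near.
Qed.

Definition sqr_bounded (K : H -> H) : Prop :=
  exists2 B : R, 0 < B & forall z, hnorm ip (K z) ^+ 2 <= B * hnorm ip z ^+ 2.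

Lemma norm_bounded_sqr_bounded (K : H -> H) (M : R) :
  (forall z, hnorm ip (K z) <= M * hnorm ip z) -> sqr_bounded K.
Proof.
move=> KM; exists (M ^+ 2 + 1); first by rewrite ltr_wpDl ?sqr_ge0.
move=> z; have := KM z; have := hnorm_ge0 (K z); have := hnorm_ge0 z; nra.
Qed.

Lemma bounded_op_sqr_bounded K : bounded_op ip K -> sqr_bounded K.
Proof. by case=> _ [M]; apply: norm_bounded_sqr_bounded. Qed.

Lemma bounded_op0 K : bounded_op ip K -> K 0 = 0.
Proof.
case=> lin _; apply: (addrI (K 0)).
by have := lin 1 0 0; rewrite scaler0 !addr0 scale1r => <-.
Qed.

Section Adjoint.
Variables K Kadj : H -> H.
Hypothesis adj : is_adjoint ip K Kadj.

Lemma adjoint0 : Kadj 0 = 0.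
Proof. by apply: ip_self_eq0; rewrite -adj ip0r. Qed.

Lemma adjoint_eq0 : (forall u, K u = 0) -> forall u, Kadj u = 0.
Proof. by move=> K0 u; apply: ip_self_eq0; rewrite -adj K0 ip0l. Qed.

Lemma adjoint_sqr_bounded : bounded_op ip K -> sqr_bounded Kadj.
Proof.
case=> _ [M KM]; apply: (@norm_bounded_sqr_bounded _ `|M|) => w.
have KM' z : hnorm ip (K z) <= `|M| * hnorm ip z.
  by apply: le_trans (KM z) _; rewrite ler_wpM2r ?hnorm_ge0 ?ler_norm.
(* [|Kadj w|^2 = Re <K (Kadj w), w> <= |M| |Kadj w| |w|] *)
have : hnorm ip (Kadj w) ^+ 2 <= `|M| * hnorm ip (Kadj w) * hnorm ip w.
  rewrite hnorm_sqrE -adj.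
  by apply: le_trans (Re_ip_le _ _) _; rewrite ler_wpM2r ?hnorm_ge0.
have [->|t_neq0] := eqVneq (hnorm ip (Kadj w)) 0; first by rewrite mulr_ge0 ?hnorm_ge0.
have t_gt0 : 0 < hnorm ip (Kadj w) by rewrite lt_def t_neq0 hnorm_ge0.
by rewrite expr2 mulrAC ler_pM2r.
Qed.

End Adjoint.

Lemma frame_sum_ge_term zs z n : ((cnorm2 (ip z (zs n)))%:E <= frame_sum ip zs z)%E.
Proof.
apply: le_trans (nneseries_lim_ge n.+1 _); last by move=> k _ _; rewrite lee_fin cnorm2_ge0.
rewrite big_nat_recr //= leeDr // sume_ge0 // => k _; exact/cnorm2_ge0.
Qed.

Lemma bessel_l2seq fs z : bessel ip fs -> l2seq (fun n => ip z (fs n)).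
Proof. by case=> B [_ /(_ z) Bz]; apply: le_lt_trans Bz _; exact: ltry. Qed.

Section Parseval.
Variables (Kadj : H -> H) (zs : nat -> H).
Hypothesis pars : parseval_K_frame ip Kadj zs.

Lemma parseval_orthogonal z : Kadj z = 0 -> forall n, ip z (zs n) = 0.
Proof.
move=> Kz0 n; apply: cnorm2_eq0; apply/eqP; rewrite eq_le cnorm2_ge0 andbT -lee_fin.
by rewrite (le_trans (frame_sum_ge_term zs z n)) // -pars Kz0 hnorm0 expr0n.
Qed.

Lemma parseval_bessel : sqr_bounded Kadj -> bessel ip zs.
Proof. by case=> B B_gt0 KB; exists B; split => // z; rewrite -pars lee_fin. Qed.

Lemma parseval_K_frame_K_frame : sqr_bounded Kadj -> K_frame ip Kadj zs.
Proof.
move=> /parseval_bessel[B [B_gt0 bes]]; exists 1, B; split => // z.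
by rewrite mul1r pars.
Qed.

End Parseval.

Lemma bessel_adjoint K Kadj fs : is_adjoint ip K Kadj -> sqr_bounded K ->
  bessel ip fs -> bessel ip (fun n => Kadj (fs n)).
Proof.
move=> adj [C C_gt0 KC] [B [B_gt0 bes]]; exists (B * C); split; first exact: mulr_gt0.
move=> z; have -> : frame_sum ip (fun n => Kadj (fs n)) z = frame_sum ip fs (K z).
  by apply: eq_eseriesr => n _; rewrite adj.
by apply: le_trans (bes _) _; rewrite lee_fin -mulrA ler_pM2l.
Qed.

Lemma hcvg_cst l : hcvg ip (fun=> l) l.
Proof. by rewrite /hcvg; under eq_fun do rewrite subrr hnorm0; exact: cvg_cst. Qed.

Lemma K_minimal_synthesis0 zs a : K_minimal ip zs -> l2seq a -> synthesis ip zs a 0 ->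
  a = fun=> 0.
Proof.
move=> zs_min l2a syn_a; apply: (zs_min a (fun=> 0) 0 l2a _ syn_a).
  by rewrite /l2seq eseries0 // => n _ _; rewrite cnorm20.
rewrite /synthesis (_ : (fun N => _) = fun=> 0); first exact: hcvg_cst.
by apply/funext => N; rewrite big1 // => n _; rewrite scale0r.
Qed.

Section Orthonormal.
Variable e : nat -> H.
Hypothesis orth : orthonormal_system ip e.

Lemma ip_partial_sum (a : nat -> R[i]) N n :
  ip (\sum_(0 <= k < N) a k *: e k) (e n) = if (n < N)%N then a n else 0.
Proof.
elim: N => [|N IH]; first by rewrite big_geq // ip0l.
rewrite big_nat_recr //= ipDl IH ipZl orth.
case: (ltngtP n N) => [nN|Nn|->].
- by rewrite ltnS ltnW // mulr0 addr0.
- by rewrite ltnS leqNgt Nn mulr0 addr0.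
- by rewrite ltnSn mulr1 add0r.
Qed.

Section Dual.
Variables K Kadj : H -> H.
Hypotheses (adj : is_adjoint ip K Kadj) (pars : parseval_K_frame ip Kadj e).

Lemma K_orthonormal_dual_cvg z :
  hcvg ip (fun N => \sum_(0 <= n < N) ip z (Kadj (e n)) *: e n) (K z).
Proof.
pose a n := ip (K z) (e n).
pose r N := \sum_(0 <= n < N) a n *: e n - K z.
have -> : (fun N => \sum_(0 <= n < N) ip z (Kadj (e n)) *: e n) =
          (fun N => \sum_(0 <= n < N) a n *: e n).
  by apply/funext => N; apply: eq_bigr => n _; rewrite /a adj.
have r_e N n : ip (r N) (e n) = if (n < N)%N then 0 else - a n.
  by rewrite ipBl ip_partial_sum; case: ifP; rewrite ?subrr ?sub0r.
have Kadj_r_cvg : (fun N => hnorm ip (Kadj (r N))) @ \oo --> (0 : R).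
  apply: sqr_cvg0 => [N|]; first exact: hnorm_ge0.
  suff : (fun N => (hnorm ip (Kadj (r N)) ^+ 2)%:E) @ \oo --> (0 : \bar R) by move/fine_cvg.
  have tail N : ((hnorm ip (Kadj (r N)) ^+ 2)%:E = \sum_(N <= n <oo) (cnorm2 (a n))%:E)%E.
    rewrite pars eseries_tail; apply: eq_eseriesr => n _.
    by rewrite r_e; case: ifP; rewrite ?cnorm20 ?cnorm2N.
  under eq_fun do rewrite tail.
  apply: nneseries_tail_cvg => [|n _]; last by rewrite lee_fin cnorm2_ge0.
  by rewrite -/(frame_sum ip e (K z)) -pars ltry.
(* [r N] is orthogonal to [e k] for [k < N], so [<r N, r N> = - <K z, r N>] *)
have r_sqr N : hnorm ip (r N) ^+ 2 <= hnorm ip z * hnorm ip (Kadj (r N)).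
  have -> : hnorm ip (r N) ^+ 2 = complex.Re (ip z (- Kadj (r N))).
    rewrite hnorm_sqrE {1}/r ipBl ip_suml big1_seq ?sub0r ?adj ?ipNr // => k.
    by rewrite mem_index_iota => /andP[_ /andP[_ kN]]; rewrite ipZl ipC r_e kN conjc0 mulr0.
  by rewrite -(hnormN (Kadj _)); exact: Re_ip_le.
apply: (sqr_cvg0 (fun N => hnorm_ge0 (r N))).
apply: (squeeze_cvgr _ (cvg_cst 0)); first by near=> N; rewrite sqr_ge0; exact: r_sqr.
by rewrite -(mulr0 (hnorm ip z)); apply: cvgM => //; exact: cvg_cst.
Unshelve. all: by end_near.
Qed.

Lemma K_orthonormal_dual_unique g :
  (forall z, hcvg ip (fun N => \sum_(0 <= n < N) ip z (g n) *: e n) (K z)) ->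
  g = fun n => Kadj (e n).
Proof.
move=> gK; apply/funext => m; apply: ip_eqr => z; rewrite -adj.
apply/esym/(hcvg_ip_eq (gK z)); near=> N; rewrite ip_partial_sum ifT //.
by near: N; exact: nbhs_infty_gt.
Unshelve. all: by end_near.
Qed.

Lemma K_orthonormal_dual_frame : sqr_bounded K -> sqr_bounded Kadj ->
  K_dual_frame ip K e (fun n => Kadj (e n)).
Proof.
move=> bK bKadj; split; first exact: bessel_adjoint adj bK (parseval_bessel pars bKadj).
exact: K_orthonormal_dual_cvg.
Qed.

End Dual.
End Orthonormal.
End InnerProduct.

Section DirectSum.
Variables (R : realType) (H1 H2 : lmodType R[i]).
Variables (ip1 : H1 -> H1 -> R[i]) (ip2 : H2 -> H2 -> R[i]).
Hypotheses (hip1 : is_inner_product ip1) (hip2 : is_inner_product ip2).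
Local Notation ip := (dsum_ip ip1 ip2).

Lemma dsum_ipE u1 u2 v1 v2 : ip (u1, u2) (v1, v2) = ip1 u1 v1 + ip2 u2 v2.
Proof. by []. Qed.

Lemma dsum_inner_product : is_inner_product ip.
Proof.
split=> [a [x1 x2] [y1 y2] [z1 z2]|[x1 x2] [y1 y2]|[x1 x2]|[x1 x2]]; rewrite !dsum_ipE /=.
- by rewrite (ipDl hip1) (ipDl hip2) (ipZl hip1) (ipZl hip2) mulrDr addrACA.
- by rewrite [ip1 y1 x1](ipC hip1) [ip2 y2 x2](ipC hip2) rmorphD.
- by rewrite (ip_self hip1) (ip_self hip2) -rmorphD ler0c addr_ge0 ?sqr_ge0.
- rewrite (ip_self hip1) (ip_self hip2) -rmorphD => /complexI /eqP.
  rewrite paddr_eq0 ?sqr_ge0 // !sqrf_eq0.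
  by case/andP=> /eqP/(hnorm_eq0 hip1)-> /eqP/(hnorm_eq0 hip2)->.
Qed.

Lemma dsum_adjoint K Kadj L Ladj : is_adjoint ip1 K Kadj -> is_adjoint ip2 L Ladj ->
  is_adjoint ip (dsum_op K L) (dsum_op Kadj Ladj).
Proof. by move=> aK aL [u1 u2] [v1 v2]; rewrite /dsum_op /= !dsum_ipE aK aL. Qed.

Lemma hnorm_dsum u : hnorm ip u ^+ 2 = hnorm ip1 u.1 ^+ 2 + hnorm ip2 u.2 ^+ 2.
Proof.
rewrite (hnorm_sqrE dsum_inner_product) (hnorm_sqrE hip1) (hnorm_sqrE hip2).
by case: u => u1 u2; rewrite dsum_ipE; case: (ip1 _ _) => ? ?; case: (ip2 _ _).
Qed.

Lemma dsum_sqr_bounded K L : sqr_bounded ip1 K -> sqr_bounded ip2 L ->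
  sqr_bounded ip (dsum_op K L).
Proof.
move=> [B1 B1_gt0 KB] [B2 B2_gt0 LB]; exists (B1 + B2); first exact: addr_gt0.
move=> [u v]; rewrite !hnorm_dsum /= mulrDl.
apply: lerD; [apply: le_trans (KB u) _|apply: le_trans (LB v) _];
  by rewrite ler_pM2l // ?lerDl ?lerDr sqr_ge0.
Qed.

Lemma hcvg_dsum_fst s l : hcvg ip s l -> hcvg ip1 (fun N => (s N).1) l.1.
Proof.
move=> sl; apply: (squeeze_cvgr _ (cvg_cst 0) sl); near=> N; rewrite hnorm_ge0 //=.
rewrite -(ler_pXn2r (_ : 0 < 2)%N) ?nnegrE ?hnorm_ge0 // [leRHS]hnorm_dsum.
by rewrite lerDl sqr_ge0.
Unshelve. all: by end_near.
Qed.

Lemma sum_dsum_fst (a : nat -> R[i]) (x : nat -> H1) (y : nat -> H2) N :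
  (\sum_(0 <= n < N) a n *: ((x n, y n) : H1 * H2)).1 = \sum_(0 <= n < N) a n *: x n.
Proof. exact: (big_morph fst (fun _ _ => erefl) erefl). Qed.

Section Sequences.
Variables (x : nat -> H1) (y : nat -> H2).
Local Notation xy := (fun n => (x n, y n)).

Lemma frame_sum_dsum_fst u : frame_sum ip xy (u, 0) = frame_sum ip1 x u.
Proof. by apply: eq_eseriesr => n _; rewrite dsum_ipE (ip0l hip2) addr0. Qed.

Lemma K_orthonormal_basis_dsum_swap Kadj Ladj :
  K_orthonormal_basis ip (dsum_op Kadj Ladj) xy <->
  K_orthonormal_basis (dsum_ip ip2 ip1) (dsum_op Ladj Kadj) (fun n => (y n, x n)).
Proof.
have hnorm_swap u v : hnorm (dsum_ip ip2 ip1) (v, u) = hnorm ip (u, v).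
  by rewrite /hnorm /dsum_ip /= addrC.
have frame_swap u v :
    frame_sum (dsum_ip ip2 ip1) (fun n => (y n, x n)) (v, u) = frame_sum ip xy (u, v).
  by apply: eq_eseriesr => n _; rewrite /dsum_ip /= addrC.
split=> -[orth pars]; split=> [n m|[u v]].
- by rewrite /dsum_ip /= addrC; exact: orth.
- by rewrite /dsum_op /= hnorm_swap frame_swap; exact: (pars (v, u)).
- by rewrite /dsum_ip /= addrC; exact: orth.
- by rewrite -hnorm_swap -frame_swap; exact: (pars (v, u)).
Qed.

Lemma K_orthonormal_basis_dsum_adj0 Kadj L Ladj :
  (forall u, Kadj u = 0) -> is_adjoint ip2 L Ladj ->
  K_orthonormal_basis ip (dsum_op Kadj Ladj) xy <->
  (forall n, x n = 0) /\ K_orthonormal_basis ip2 Ladj y.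
Proof.
move=> Kadj0 aL.
have hnorm_adj u v : hnorm ip (dsum_op Kadj Ladj (u, v)) ^+ 2 = hnorm ip2 (Ladj v) ^+ 2.
  by rewrite hnorm_dsum /= Kadj0 (hnorm0 hip1) expr0n add0r.
have frame_x0 u v : (forall n, x n = 0) -> frame_sum ip xy (u, v) = frame_sum ip2 y v.
  by move=> x0; apply: eq_eseriesr => n _; rewrite dsum_ipE x0 (ip0r hip1) add0r.
split=> [[orth pars]|[x0 [orth2 pars2]]].
- have x0 n : x n = 0.
    apply: (ip_self_eq0 hip1).
    have Kadj_xn : dsum_op Kadj Ladj (x n, 0) = 0.
      by rewrite /dsum_op /= Kadj0 (adjoint0 hip2 aL).
    have := parseval_orthogonal dsum_inner_product pars Kadj_xn n.
    by rewrite dsum_ipE (ip0l hip2) addr0.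
  split=> //; split=> [n m|v].
  + by have := orth n m; rewrite dsum_ipE !x0 (ip0l hip1) add0r.
  + by rewrite -(frame_x0 0 v) // -pars hnorm_adj.
- split=> [n m|[u v]]; first by rewrite dsum_ipE !x0 (ip0l hip1) add0r; exact: orth2.
  by rewrite hnorm_adj frame_x0 // pars2.
Qed.

Lemma dsum_dual_cvg_fst K L g :
  (forall z, hcvg ip (fun N => \sum_(0 <= n < N) ip z (g n) *: xy n) (dsum_op K L z)) ->
  forall u, hcvg ip1 (fun N => \sum_(0 <= n < N) ip1 u (g n).1 *: x n) (K u).
Proof.
move=> gKL u.
suff -> : (fun N => \sum_(0 <= n < N) ip1 u (g n).1 *: x n) =
          (fun N => (\sum_(0 <= n < N) ip (u, 0) (g n) *: xy n).1).
  exact: hcvg_dsum_fst (gKL (u, 0)).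
apply/funext => N; rewrite sum_dsum_fst; apply: eq_bigr => n _.
by case: (g n) => ? ?; rewrite dsum_ipE (ip0l hip2) addr0.
Qed.

Lemma dsum_not_K_minimal_fst K L g : K_dual_frame ip (dsum_op K L) xy g ->
  K 0 = 0 -> ~ (forall v, L v = 0) -> ~ K_minimal ip1 x.
Proof.
move=> [bes gKL] K00 Ln0 xmin; apply: Ln0 => w.
(* the expansion of [(K 0, L w) = (0, L w)] synthesises [0] from [x] *)
have a0 : (fun n => ip (0, w) (g n)) = fun=> 0.
  apply: (K_minimal_synthesis0 hip1 xmin (bessel_l2seq _ bes)).
  rewrite /synthesis -[X in hcvg _ _ X]K00.
  rewrite (_ : (fun N => _) = (fun N => (\sum_(0 <= n < N) ip (0, w) (g n) *: xy n).1)).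
    exact: hcvg_dsum_fst (gKL (0, w)).
  by apply/funext => N; rewrite sum_dsum_fst.
suff /(congr1 snd) : dsum_op K L (0, w) = 0 by [].
apply: (hcvg0_eq0 dsum_inner_product _ (gKL (0, w))) => N.
by rewrite big1 // => n _; rewrite (congr1 (@^~ n) a0) scale0r.
Qed.

Section Operators.
Variables (K Kadj : H1 -> H1) (L Ladj : H2 -> H2).
Hypotheses (bK : bounded_op ip1 K) (aK : is_adjoint ip1 K Kadj).
Hypotheses (bL : bounded_op ip2 L) (aL : is_adjoint ip2 L Ladj).
Hypothesis onb : K_orthonormal_basis ip (dsum_op Kadj Ladj) xy.

Lemma K_orthonormal_basis_dsum_dual :
  K_dual_frame ip (dsum_op K L) xy (fun n => dsum_op Kadj Ladj (xy n)) /\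
  forall g, K_dual_frame ip (dsum_op K L) xy g -> g = fun n => dsum_op Kadj Ladj (xy n).
Proof.
have [orth pars] := onb; have aKL := dsum_adjoint aK aL.
split=> [|g [_ gKL]]; last exact: (K_orthonormal_dual_unique dsum_inner_product orth aKL gKL).
apply: (K_orthonormal_dual_frame dsum_inner_product orth aKL pars); apply: dsum_sqr_bounded.
- exact: bounded_op_sqr_bounded.
- exact: bounded_op_sqr_bounded.
- exact: adjoint_sqr_bounded.
- exact: adjoint_sqr_bounded.
Qed.

Lemma K_orthonormal_basis_dsum_fst : ~ (forall v, L v = 0) ->
  [/\ K_frame ip1 Kadj x, ~ K_minimal ip1 x & K_dual_frame ip1 K x (fun n => Kadj (x n))].
Proof.
move=> Ln0; have [[dual _] [_ pars]] := (K_orthonormal_basis_dsum_dual, onb).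
have pars1 : parseval_K_frame ip1 Kadj x.
  move=> u; rewrite -frame_sum_dsum_fst -pars hnorm_dsum /=.
  by rewrite (adjoint0 hip2 aL) (hnorm0 hip2) expr0n addr0.
have sKadj := adjoint_sqr_bounded hip1 aK bK.
split.
- exact: parseval_K_frame_K_frame pars1 sKadj.
- exact: dsum_not_K_minimal_fst dual (bounded_op0 bK) Ln0.
- split; last exact: dsum_dual_cvg_fst dual.2.
  exact: bessel_adjoint aK (bounded_op_sqr_bounded bK) (parseval_bessel pars1 sKadj).
Qed.

End Operators.

End Sequences.
End DirectSum.

Unset Implicit Arguments.

Theorem proposition2p23 (R : realType)
  (H1 H2 : lmodType R[i])
  (ip1 : H1 -> H1 -> R[i]) (ip2 : H2 -> H2 -> R[i])
  (hH1 : is_hilbert ip1) (sH1 : separable ip1)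
  (hH2 : is_hilbert ip2) (sH2 : separable ip2)
  (K Kadj : H1 -> H1) (L Ladj : H2 -> H2)
  (bK : bounded_op ip1 K) (aK : is_adjoint ip1 K Kadj)
  (bL : bounded_op ip2 L) (aL : is_adjoint ip2 L Ladj)
  (x : nat -> H1) (y : nat -> H2) :
  let ip := dsum_ip ip1 ip2 in
  let KL := dsum_op K L in
  let KLadj := dsum_op Kadj Ladj in
  let xy := fun n => (x n, y n) in
  (* (i) *)
  ((forall u, K u = 0) -> ~ (forall v, L v = 0) ->
     (K_orthonormal_basis ip KLadj xy <->
      (forall n, x n = 0) /\ K_orthonormal_basis ip2 Ladj y)) /\
  (* (ii) *)
  (~ (forall u, K u = 0) -> (forall v, L v = 0) ->
     (K_orthonormal_basis ip KLadj xy <->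
      (forall n, y n = 0) /\ K_orthonormal_basis ip1 Kadj x)) /\
  (* (iii) *)
  (~ (forall u, K u = 0) -> ~ (forall v, L v = 0) ->
     K_orthonormal_basis ip KLadj xy ->
     [/\ (* (a) *)
         K_dual_frame ip KL xy (fun n => KLadj (xy n)) /\
         (forall g : nat -> (H1 * H2)%type, K_dual_frame ip KL xy g ->
            g = (fun n => KLadj (xy n))),
         (* (b) *)
         [/\ K_frame ip1 Kadj x, ~ K_minimal ip1 x &
             K_dual_frame ip1 K x (fun n => Kadj (x n))] &
         (* (c) *)
         [/\ K_frame ip2 Ladj y, ~ K_minimal ip2 y &
             K_dual_frame ip2 L y (fun n => Ladj (y n))]]).
Proof.
move=> ip KL KLadj xy.
have [[hip1 _] [hip2 _]] := (hH1, hH2).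
split; [|split].
- move=> K0 _.
  exact: (K_orthonormal_basis_dsum_adj0 hip1 hip2 x y (adjoint_eq0 hip1 aK K0) aL).
- move=> _ L0; rewrite K_orthonormal_basis_dsum_swap.
  exact: (K_orthonormal_basis_dsum_adj0 hip2 hip1 y x (adjoint_eq0 hip2 aL L0) aK).
- move=> Kn0 Ln0 onb; split.
  + exact: (K_orthonormal_basis_dsum_dual hip1 hip2 bK aK bL aL onb).
  + exact: (K_orthonormal_basis_dsum_fst hip1 hip2 bK aK bL aL onb Ln0).
  + have onb_swap := proj1 (K_orthonormal_basis_dsum_swap _ _ _ _ _ _) onb.
    exact: (K_orthonormal_basis_dsum_fst hip2 hip1 bL aL bK aK onb_swap Kn0).
Qed.
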